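(* Let $X,Y$ be mm-spaces and let $\varphi:I\to X$, $\psi:I\to Y$ be parameters of $X$ and $Y$. Then \[ \square(\varphi^*d_X,\psi^*d_Y)=\operatorname{dis}\big((\varphi,\psi)_*\mathcal L^1\big). \]
   Context: An mm-space is a complete separable metric space with a Borel probability measure. $I=[0,1)$ with Lebesgue measure $\mathcal L^1$; a parameter of $X$ is a Borel $\varphi:I\to X$ with $\varphi_*\mathcal L^1=m_X$; $\varphi^*d_X(s,t):=d_X(\varphi(s),\varphi(t))$. For pseudo-metrics $\rho_1,\rho_2$ on $I$, $\square(\rho_1,\rho_2)$ is the infimum of $\varepsilon\ge0$ such that some Borel $I_0\subset I$ has $\mathcal L^1(I_0)\ge1-\varepsilon$ and $|\rho_1(s,t)-\rho_2(s,t)|\le\varepsilon$ for all $s,t\in I_0$. For nonempty $S\subset X\times Y$, $\operatorname{dis}S:=\sup\{|d_X(x,x')-d_Y(y,y')|:(x,y),(x',y')\in S\}$, $\operatorname{dis}\emptyset:=\infty$; for a Borel probability measure $\pi$ on $X\times Y$, $\operatorname{dis}\pi:=\inf_S\max\{\operatorname{dis}S,1-\pi(S)\}$ over closed $S\subset X\times Y$. *)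

From HB Require Import structures.
From mathcomp Require Import all_boot all_order all_algebra.
From mathcomp Require Import all_classical all_reals all_analysis.
Set Implicit Arguments. Unset Strict Implicit. Unset Printing Implicit Defensive.
Import Order.TTheory GRing.Theory Num.Theory.
Local Open Scope classical_set_scope.
Local Open Scope ring_scope.

Section Defs.
Variable R : realType.

Definition is_metric (T : Type) (d : T -> T -> R) : Prop :=
  (forall x y, 0 <= d x y) /\ (forall x y, d x y = 0 <-> x = y) /\
  (forall x y, d x y = d y x) /\ (forall x y z, d x z <= d x y + d y z).

Definition dcomplete (T : Type) (d : T -> T -> R) : Prop :=
  forall u : nat -> T,
    (forall e, 0 < e -> exists N, forall m n, (N <= m)%N -> (N <= n)%N -> d (u m) (u n) < e) ->
    exists l, forall e, 0 < e -> exists N, forall n, (N <= n)%N -> d (u n) l < e.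

Definition dseparable (T : Type) (d : T -> T -> R) : Prop :=
  exists D : set T, countable D /\
    forall x e, 0 < e -> exists2 y, D y & d x y < e.

Definition dopen (T : Type) (d : T -> T -> R) (A : set T) : Prop :=
  forall x, A x -> exists2 r, 0 < r & forall y, d x y < r -> A y.

Definition mm_space (dsp : measure_display) (X : measurableType dsp)
  (dX : X -> X -> R) (mX : probability X R) : Prop :=
  [/\ is_metric dX, dcomplete dX, dseparable dX &
      (@measurable dsp X) = <<s dopen dX>>].

(* the domain I = [0,1) with Lebesgue measure; maps I -> X are modelled as
   maps R -> X whose values outside [0,1) are irrelevant *)
Definition Iset : set R := `[0, 1[%classic.

Definition LebI (A : set R) : \bar R := (@lebesgue_measure R) (Iset `&` A).

Definition is_parameter (dsp : measure_display) (X : measurableType dsp)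
  (mX : probability X R) (phi : R -> X) : Prop :=
  measurable_fun Iset phi /\
  forall A : set X, measurable A -> mX A = LebI (phi @^-1` A).

Definition pullback (X : Type) (dX : X -> X -> R) (phi : R -> X) : R -> R -> R :=
  fun s t => dX (phi s) (phi t).

Definition box (rho1 rho2 : R -> R -> R) : \bar R :=
  ereal_inf [set e%:E | e in [set e : R | 0 <= e /\
     exists I0 : set R, [/\ measurable I0, I0 `<=` Iset,
        ((1 - e)%:E <= (@lebesgue_measure R) I0)%E &
        forall s t, I0 s -> I0 t -> `|rho1 s t - rho2 s t| <= e]]].

Definition closedXY (X Y : Type) (dX : X -> X -> R) (dY : Y -> Y -> R)
  (S : set (X * Y)) : Prop :=
  forall x y, ~ S (x, y) -> exists2 r, 0 < r &
    forall x' y', dX x x' < r -> dY y y' < r -> ~ S (x', y').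

Definition dis_set (X Y : Type) (dX : X -> X -> R) (dY : Y -> Y -> R)
  (S : set (X * Y)) : \bar R :=
  if `[< S = set0 >] then +oo%E
  else ereal_sup [set `|dX p.1.1 p.2.1 - dY p.1.2 p.2.2|%:E
                   | p in [set pq : (X * Y) * (X * Y) | S pq.1 /\ S pq.2]].

Definition dis_meas (X Y : Type) (dX : X -> X -> R) (dY : Y -> Y -> R)
  (pi : set (X * Y) -> \bar R) : \bar R :=
  ereal_inf [set maxe (dis_set dX dY S) (1%:E - pi S)%E
             | S in [set S | closedXY dX dY S]].

Definition push_pair (X Y : Type) (phi : R -> X) (psi : R -> Y)
  (S : set (X * Y)) : \bar R := LebI ((fun s => (phi s, psi s)) @^-1` S).

End Defs.

From HB Require Import structures.
From mathcomp Require Import all_boot all_order all_algebra.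
From mathcomp Require Import all_classical all_reals all_analysis.
From mathcomp Require Import lra.
Import Order.TTheory GRing.Theory Num.Theory.
Local Open Scope classical_set_scope.
Local Open Scope ring_scope.

(* If S is closed in X x Y, the set of s in I with (phi s, psi s) in S is Borel
   (the complement of S is a countable union of products of balls, by
   separability), has measure (phi, psi)_* L^1 (S), and on it the two pull-back
   metrics differ by at most dis S; so box <= dis. Conversely, given I0 as in the
   definition of box for some e, the closure of the image of I0 under
   (phi, psi) is closed, still has distortion at most e since the metrics are
   1-Lipschitz, and contains the image of I0, hence has mass at least 1 - e. *)

Set Implicit Arguments. Unset Strict Implicit.

Lemma EFin_oneB_le (R : realType) (x : \bar R) (e : R) :
  ((1 - e)%:E <= x)%E = (1%:E - x <= e%:E)%E.
Proof. by rewrite EFinB leeBlDr // lee_subel_addr // addeC. Qed.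

Section Metric.
Variables (R : realType) (T : Type) (d : T -> T -> R).
Hypothesis hd : is_metric d.

Lemma metric_xx x : d x x = 0.
Proof. by have [_ [dE _]] := hd; apply/dE. Qed.

Lemma metric_dist_diff_le x x' a b : `|d x x' - d a b| <= d x a + d x' b.
Proof.
have [_ [_ [dS dT]]] := hd.
have := dT x a x'; have := dT a b x'; have := dT a x b; have := dT x x' b.
rewrite ler_norml (dS a x) (dS b x') => *; apply/andP; split; lra.
Qed.

Lemma metric_ball_dopen a r : dopen d [set y | d a y < r].
Proof.
have [_ [_ [_ dT]]] := hd.
move=> x /= hx; exists (r - d a x); first by rewrite subr_gt0.
by move=> y hy; have := dT a x y; lra.
Qed.

End Metric.

Section MMSpace.
Variables (R : realType) (dsp : measure_display) (X : measurableType dsp).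
Variables (dX : X -> X -> R) (mX : probability X R).
Hypothesis hX : mm_space dX mX.

Lemma mm_space_ball_measurable a r : measurable [set y | dX a y < r].
Proof.
have [mtX _ _ ->] := hX.
by apply: sub_sigma_algebra; exact: (metric_ball_dopen mtX).
Qed.

Lemma mm_space_dense_seq :
  exists g : nat -> X, forall x e, 0 < e -> exists i, dX x (g i) < e.
Proof.
have [_ _ [D [cD dD]] _] := hX.
have /pcard_surjP [g gs] := cD.
exists g => x e e0; have [y Dy hy] := dD x e e0.
by have [i _ giy] := gs y Dy; exists i; rewrite giy.
Qed.

End MMSpace.

Section Distortion.
Variables (R : realType) (X Y : Type) (dX : X -> X -> R) (dY : Y -> Y -> R).
Hypotheses (hdX : is_metric dX) (hdY : is_metric dY).

Lemma dis_set_ub (S : set (X * Y)) x y x' y' : S (x, y) -> S (x', y') ->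
  (`|dX x x' - dY y y'|%:E <= dis_set dX dY S)%E.
Proof.
move=> Sxy Sxy'; rewrite /dis_set; case: asboolP => [S0|_].
  by move: Sxy; rewrite S0.
by apply: ereal_sup_ubound; exists ((x, y), (x', y')).
Qed.

Lemma dis_set_ge0 (S : set (X * Y)) : (0 <= dis_set dX dY S)%E.
Proof.
have [[[x y] Sxy]|nS] := pselect (exists p, S p).
  by apply: le_trans (dis_set_ub Sxy Sxy); rewrite !metric_xx // subrr normr0.
have -> : S = set0 by apply/seteqP; split => // p Sp; apply: nS; exists p.
by rewrite /dis_set; case: asboolP => // -[].
Qed.

Lemma dis_set_le (S : set (X * Y)) e : (exists p, S p) ->
  (forall x y x' y', S (x, y) -> S (x', y') -> `|dX x x' - dY y y'| <= e) ->
  (dis_set dX dY S <= e%:E)%E.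
Proof.
move=> [p Sp] hS; rewrite /dis_set; case: asboolP => [S0|_].
  by move: Sp; rewrite S0.
by apply/ereal_supP => _ [[[x y] [x' y']] /= [Sxy Sxy'] <-]; rewrite lee_fin hS.
Qed.

Definition closureXY (A : set (X * Y)) : set (X * Y) :=
  [set p | forall r, 0 < r -> exists2 q, A q & dX p.1 q.1 < r /\ dY p.2 q.2 < r].

Lemma sub_closureXY (A : set (X * Y)) : A `<=` closureXY A.
Proof. by move=> p Ap r r0; exists p; rewrite // !metric_xx. Qed.

Lemma closedXY_closureXY (A : set (X * Y)) : closedXY dX dY (closureXY A).
Proof.
have [_ [_ [_ dXt]]] := hdX; have [_ [_ [_ dYt]]] := hdY.
move=> x y nA.
have [r r0 hr] : exists2 r, 0 < r & forall q, A q ->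
    ~ (dX x q.1 < r /\ dY y q.2 < r).
  apply: contrapT => h; apply: nA => r r0; apply: contrapT => h'.
  by apply: h; exists r => // q Aq hq; apply: h'; exists q.
exists (r / 2); first by rewrite divr_gt0.
move=> x' y' hx hy /(_ (r / 2) ltac:(by rewrite divr_gt0)) [q Aq [qx qy]].
apply: (hr q Aq); split.
- by apply: le_lt_trans (dXt x x' q.1) _; rewrite /= in qx; lra.
- by apply: le_lt_trans (dYt y y' q.2) _; rewrite /= in qy; lra.
Qed.

(* Approximate both pairs of points of the closure within r / 4 by points of A. *)
Lemma dis_set_closureXY_le (A : set (X * Y)) e : (exists p, A p) ->
  (forall x y x' y', A (x, y) -> A (x', y') -> `|dX x x' - dY y y'| <= e) ->
  (dis_set dX dY (closureXY A) <= e%:E)%E.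
Proof.
move=> [p Ap] hA; apply: dis_set_le; first by exists p; exact: sub_closureXY.
move=> x y x' y' Axy Axy'; apply/ler_addgt0Pr => r r0.
have r4 : 0 < r / 4 by rewrite divr_gt0.
have [[a b] Aab /= [xa yb]] := Axy _ r4.
have [[a' b'] Aab' /= [xa' yb']] := Axy' _ r4.
have := hA _ _ _ _ Aab Aab'.
have := metric_dist_diff_le hdX x x' a a'; have := metric_dist_diff_le hdY y y' b b'.
rewrite !ler_norml => /andP[? ?] /andP[? ?] /andP[? ?]; apply/andP; split; lra.
Qed.

Definition rectXY (a : X) (b : Y) (r : R) : set (X * Y) :=
  [set y | dX a y < r] `*` [set y | dY b y < r].

(* The index k = (n, i, j) encodes the product of balls of radius 1 / (n + 1)
   centred at the i-th and j-th points of the dense sequences. *)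
Lemma closedXY_setC_bigcup (gX : nat -> X) (gY : nat -> Y) (S : set (X * Y)) :
  (forall x e, 0 < e -> exists i, dX x (gX i) < e) ->
  (forall y e, 0 < e -> exists j, dY y (gY j) < e) ->
  closedXY dX dY S ->
  ~` S = \bigcup_(k in [set k | rectXY (gX k.1.2) (gY k.2) k.1.1.+1%:R^-1 `&` S = set0])
           rectXY (gX k.1.2) (gY k.2) k.1.1.+1%:R^-1.
Proof.
have [_ [_ [dXs dXt]]] := hdX; have [_ [_ [dYs dYt]]] := hdY.
move=> gXd gYd cS; apply/seteqP; split => [[x y] nS|p [k /= Sk pk] Sp]; last first.
  by move/seteqP: Sk => [/(_ p (conj pk Sp))].
have [r r0 hr] := cS _ _ nS.
have [n] := ltr_add_invr (ltac:(lra) : 0 < r / 2); rewrite add0r => hn.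
have n0 : 0 < n.+1%:R^-1 :> R by rewrite invr_gt0 ltr0n.
have [i hi] := gXd x _ n0; have [j hj] := gYd y _ n0.
exists (n, i, j); last by split; rewrite /= 1?dXs 1?dYs.
apply/seteqP; split => // -[x' y'] [[/= hx hy] Sxy']; apply: (hr x' y') => //.
- apply: le_lt_trans (dXt x (gX i) x') _.
  by move: hn hi hx; move: (n.+1%:R^-1) => t; lra.
- apply: le_lt_trans (dYt y (gY j) y') _.
  by move: hn hj hy; move: (n.+1%:R^-1) => t; lra.
Qed.

End Distortion.

Section Pairing.
Variables (R : realType).
Variables (dspX : measure_display) (X : measurableType dspX).
Variables (dX : X -> X -> R) (mX : probability X R).
Variables (dspY : measure_display) (Y : measurableType dspY).
Variables (dY : Y -> Y -> R) (mY : probability Y R).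
Hypotheses (hX : mm_space dX mX) (hY : mm_space dY mY).
Variables (phi : R -> X) (psi : R -> Y).
Hypotheses (mphi : measurable_fun (@Iset R) phi) (mpsi : measurable_fun (@Iset R) psi).

Let pairing := fun s => (phi s, psi s).

Lemma closedXY_preimage_measurable (S : set (X * Y)) :
  closedXY dX dY S -> measurable (@Iset R `&` pairing @^-1` S).
Proof.
move=> cS; have [gX gXd] := mm_space_dense_seq hX.
have [gY gYd] := mm_space_dense_seq hY.
have [mtX _ _ _] := hX; have [mtY _ _ _] := hY.
have mI : measurable (@Iset R) by exact: measurable_itv.
pose P := [set k : nat * nat * nat |
  rectXY dX dY (gX k.1.2) (gY k.2) k.1.1.+1%:R^-1 `&` S = set0].
pose F k := @Iset R `&` pairing @^-1` rectXY dX dY (gX k.1.2) (gY k.2) k.1.1.+1%:R^-1.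
have -> : @Iset R `&` pairing @^-1` S = @Iset R `\` \bigcup_(k in P) F k.
  rewrite -[S]setCK (closedXY_setC_bigcup mtX mtY gXd gYd cS).
  apply/seteqP; split => s [Is hs]; split => //.
    by move=> [k Pk [_ ks]]; apply: hs; exists k.
  by move=> [k Pk ks]; apply: hs; exists k.
apply: measurableD => //; rewrite bigcup_mkcond.
apply: countable_bigcupT_measurable => // k; case: ifP => // _.
have -> : F k = (@Iset R `&` phi @^-1` [set y | dX (gX k.1.2) y < k.1.1.+1%:R^-1]) `&`
    (@Iset R `&` psi @^-1` [set y | dY (gY k.2) y < k.1.1.+1%:R^-1]).
  by apply/seteqP; split => s /= => [[Is [h1 h2]] | [[Is h1] [_ h2]]].
apply: measurableI.
- by apply: (mphi mI); exact: (mm_space_ball_measurable hX (gX k.1.2)).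
- by apply: (mpsi mI); exact: (mm_space_ball_measurable hY (gY k.2)).
Qed.

Lemma box_le_closedXY (S : set (X * Y)) : closedXY dX dY S ->
  (box (pullback dX phi) (pullback dY psi) <=
     maxe (dis_set dX dY S) (1%:E - push_pair phi psi S))%E.
Proof.
move=> cS; have [mtX _ _ _] := hX; have [mtY _ _ _] := hY.
have dS0 := dis_set_ge0 mtX mtY S.
move: (lexx (maxe (dis_set dX dY S) (1%:E - push_pair phi psi S))%E).
rewrite {1}ge_max => /andP[]; case: (maxe _ _) => [m| |] lm lp;
  [|by rewrite leey|by have := le_trans dS0 lm].
apply: ereal_inf_lbound; exists m => //; split; first by rewrite -lee_fin (le_trans dS0 lm).
exists (@Iset R `&` pairing @^-1` S); split.
- exact: closedXY_preimage_measurable.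
- exact: subIsetl.
- by rewrite EFin_oneB_le.
- by move=> s t [_ Ss] [_ St]; rewrite -lee_fin (le_trans (dis_set_ub dX dY Ss St) lm).
Qed.

(* When I0 is empty, 1 - e <= 0 and the closure of any single point will do. *)
Lemma dis_meas_le_box (e : R) (I0 : set R) : measurable I0 -> I0 `<=` @Iset R ->
  ((1 - e)%:E <= lebesgue_measure I0)%E ->
  (forall s t, I0 s -> I0 t -> `|pullback dX phi s t - pullback dY psi s t| <= e) ->
  (dis_meas dX dY (push_pair phi psi) <= e%:E)%E.
Proof.
move=> mI0 sI0 hI0 bnd; have [mtX _ _ _] := hX; have [mtY _ _ _] := hY.
suff [A [A0 hA hpush]] : exists A : set (X * Y), [/\ exists p, A p,
    forall x y x' y', A (x, y) -> A (x', y') -> `|dX x x' - dY y y'| <= e &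
    ((1 - e)%:E <= push_pair phi psi (closureXY dX dY A))%E].
  apply: le_trans (ereal_inf_lbound _) _; first by exists (closureXY dX dY A);
    [exact: closedXY_closureXY|].
  by rewrite ge_max dis_set_closureXY_le // -EFin_oneB_le.
have [[s0 Is0]|nI0] := pselect (exists s, I0 s).
- exists (pairing @` I0); split.
  + by exists (pairing s0), s0.
  + by move=> x y x' y' [s Is [<- <-]] [t It [<- <-]]; exact: bnd.
  + apply: le_trans hI0 _; apply: le_measure; rewrite ?inE //.
      exact: closedXY_preimage_measurable (closedXY_closureXY mtX mtY (A := _)).
    by move=> s Is; split; [exact: sI0 | apply: sub_closureXY => //; exists s].
- have I00 : I0 = set0 by apply/seteqP; split => // s Is; apply: nI0; exists s.
  rewrite I00 measure0 lee_fin in hI0.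
  exists [set pairing 0]; split => [|x y x' y' [-> ->] [-> ->]|].
  + by exists (pairing 0).
  + by rewrite !metric_xx // subrr normr0; lra.
  + by apply: le_trans (measure_ge0 _ _); rewrite lee_fin; lra.
Qed.

End Pairing.

Theorem lemma4p3 (R : realType)
  (dspX : measure_display) (X : measurableType dspX)
  (dX : X -> X -> R) (mX : probability X R)
  (dspY : measure_display) (Y : measurableType dspY)
  (dY : Y -> Y -> R) (mY : probability Y R)
  (hX : mm_space dX mX) (hY : mm_space dY mY)
  (phi : R -> X) (psi : R -> Y)
  (hphi : is_parameter mX phi) (hpsi : is_parameter mY psi) :
  box (pullback dX phi) (pullback dY psi) =
  dis_meas dX dY (push_pair phi psi).
Proof.
apply/le_anti/andP; split.
- apply/ereal_infP => _ [S cS <-].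
  exact: (box_le_closedXY hX hY hphi.1 hpsi.1 cS).
- apply/ereal_infP => _ [e [_ [I0 [mI0 sI0 hI0 bnd]]] <-].
  exact: (dis_meas_le_box hX hY hphi.1 hpsi.1 mI0 sI0 hI0 bnd).
Qed.
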